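(* Let $\Gamma\neq\mathbb N$ be the semigroup associated to an irreducible plane curve singularity, minimally generated by $r_0<\cdots<r_h$, with conductor $c$. Then $c\ge \frac53 2^{2h}-3\cdot 2^h+\frac43$.
   Context: A numerical semigroup is a submonoid of $(\mathbb N,+)$ with finite complement in $\mathbb N$; it has a unique minimal generating system. The conductor is $c=\mathrm F(\Gamma)+1$, where $\mathrm F(\Gamma)$ is the largest integer not in $\Gamma$. $\langle X\rangle$ is the submonoid generated by $X$. For an arrangement $(r_0,\ldots,r_h)$ of the minimal generators, set $d_k=\gcd(r_0,\ldots,r_{k-1})$ and $e_k=d_k/d_{k+1}$. A set $A$ of positive integers with nontrivial partition $A=A_1\cup A_2$ is the gluing of $A_1$ and $A_2$ if $\mathrm{lcm}(\gcd A_1,\gcd A_2)\in\langle A_1\rangle\cap\langle A_2\rangle$. $\Gamma$ is free for $(r_0,\ldots,r_h)$ if $h=0$, or $h\ge1$, $\{r_0,\ldots,r_h\}$ is the gluing of $\{r_0,\ldots,r_{h-1}\}$ and $\{r_h\}$, and $\langle r_0/d_h,\ldots,r_{h-1}/d_h\rangle$ is free for $(r_0/d_h,\ldots,r_{h-1}/d_h)$. $\Gamma$ is telescopic if it is free for the increasing arrangement $r_0<\cdots<r_h$. $\Gamma$ is the semigroup associated to an irreducible plane curve singularity if it is telescopic and $e_kr_k<r_{k+1}$ for all $k=1,\ldots,h-1$. *)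

From mathcomp Require Import all_boot all_order all_algebra.
Set Implicit Arguments. Unset Strict Implicit. Unset Printing Implicit Defensive.

Inductive gen (X : seq nat) : nat -> Prop :=
| gen0 : gen X 0
| genS x n : x \in X -> gen X n -> gen X (x + n).

Definition finite_complement (X : seq nat) : Prop :=
  exists N, forall n, N <= n -> gen X n.

(* X is a minimal generating system of <X>: no element of X lies in the
   submonoid generated by the remaining ones (in particular 0 \notin X). *)
Definition minimal_gens (X : seq nat) : Prop :=
  uniq X /\ forall x, x \in X -> ~ gen (rem x X) x.

Definition frobenius (X : seq nat) (F : nat) : Prop :=
  ~ gen X F /\ forall n, F < n -> gen X n.

(* gcd of a list (gcd of the empty list is 0). *)
Definition gcdl (X : seq nat) : nat := foldr gcdn 0 X.

(* d_k = gcd(r_0,...,r_{k-1}),  e_k = d_k / d_{k+1}. *)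
Definition dk (r : seq nat) (k : nat) : nat := gcdl (take k r).
Definition ek (r : seq nat) (k : nat) : nat := dk r k %/ dk r k.+1.

Definition gluing (A1 A2 : seq nat) : Prop :=
  A1 != [::] /\ A2 != [::] /\
  gen A1 (lcmn (gcdl A1) (gcdl A2)) /\ gen A2 (lcmn (gcdl A1) (gcdl A2)).

(* free for the arrangement r = (r_0,...,r_h); fuel n >= size r. *)
Fixpoint free_fuel (n : nat) (r : seq nat) : Prop :=
  match n with
  | 0 => True
  | n'.+1 =>
      if size r <= 1 then True
      else
        let h := (size r).-1 in
        gluing (take h r) [:: nth 0 r h] /\
        free_fuel n' (map (fun x => x %/ dk r h) (take h r))
  end.

Definition free_for (r : seq nat) : Prop := free_fuel (size r) r.

Definition telescopic (r : seq nat) : Prop := sorted ltn r /\ free_for r.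

Definition plane_curve_semigroup (r : seq nat) : Prop :=
  telescopic r /\
  forall k, 1 <= k -> k <= (size r).-1 - 1 ->
    ek r k * nth 0 r k < nth 0 r k.+1.

From mathcomp Require Import all_boot all_order all_algebra.
From mathcomp Require Import zify ring lra.

(* Write [d = d_h] and [T = r_h].  Freeness makes <r_0, ..., r_h> the gluing
   of [d * G'] and <T>, where G' = <r_0/d, ..., r_{h-1}/d> is again the
   semigroup of a plane curve with h - 1 characteristic exponents, and
   [d >= 2] because [T] is a minimal generator.  If [c' - 1] is a gap of G'
   then [d c' + (d - 1)(T - 1) - 1] is a gap of the glued semigroup, so the
   conductor satisfies [c >= d c' + (d - 1)(T - 1)].  The inequality
   [T > e_{h-1} r_{h-1}] with [e_{h-1}, d >= 2] gives [T >= 4 a + 1] where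
   [a] bounds the last generator of G'; solving the two recurrences yields
   [r_h >= (5 * 4^h - 2) / 6] and the stated bound on [c]. *)

Set Implicit Arguments.
Unset Strict Implicit.
Unset Printing Implicit Defensive.

Lemma gen_sub X Y n : {subset X <= Y} -> gen X n -> gen Y n.
Proof. by move=> sXY; elim=> [|x m /sXY Yx _ IH]; [exact: gen0 | exact: genS]. Qed.

Lemma gen_add X a b : gen X a -> gen X b -> gen X (a + b).
Proof. by move=> + Xb; elim=> [|x m Xx _ IH] //; rewrite -addnA; exact: genS. Qed.

Lemma gen_mulr X a k : gen X a -> gen X (a * k).
Proof.
move=> Xa; elim: k => [|k IH]; first by rewrite muln0; exact: gen0.
by rewrite mulnS; exact: gen_add.
Qed.

Lemma gen_scale X d n : gen X n -> gen (map (fun x => x * d) X) (n * d).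
Proof.
elim=> [|x m Xx _ IH]; first exact: gen0.
by rewrite mulnDl; apply: genS IH; exact: map_f.
Qed.

Lemma gen_scale_inv X d n :
  gen (map (fun x => x * d) X) n -> exists2 m, n = m * d & gen X m.
Proof.
elim=> [|_ n' /mapP[x Xx ->] _ [m -> Xm]]; first by exists 0 => //; exact: gen0.
by exists (x + m); [rewrite mulnDl | exact: genS].
Qed.

Lemma gen_cats1_inv X y n :
  gen (X ++ [:: y]) n -> exists a k, gen X a /\ n = a + y * k.
Proof.
elim=> [|x m + _ [a [k [Xa ->]]]]; first by exists 0, 0; split; [exact: gen0 | rewrite muln0].
rewrite mem_cat mem_seq1 => /orP[Xx | /eqP->].
  by exists (x + a), k; split; [exact: genS | rewrite addnA].
by exists a, k.+1; split => //; rewrite mulnS; lia.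
Qed.

Lemma gcdl_dvd X x : x \in X -> gcdl X %| x.
Proof.
elim: X => [|y X IH] //=; rewrite in_cons => /orP[/eqP-> | /IH].
  exact: dvdn_gcdl.
exact: dvdn_trans (dvdn_gcdr _ _).
Qed.

Lemma gcdl_dvd_gen X n : gen X n -> gcdl X %| n.
Proof. by elim=> [|x m Xx _ IH]; [exact: dvdn0 | exact: dvdn_add (gcdl_dvd Xx) IH]. Qed.

Lemma gcdl_cat X Y : gcdl (X ++ Y) = gcdn (gcdl X) (gcdl Y).
Proof. by elim: X => [|x X IH] /=; rewrite ?gcd0n // IH gcdnA. Qed.

Lemma gcdl_scale X d : gcdl (map (fun x => x * d) X) = gcdl X * d.
Proof. by elim: X => [|x X IH] //=; rewrite IH muln_gcdl. Qed.

Lemma map_rem_inj (T U : eqType) (f : T -> U) x s :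
  injective f -> map f (rem x s) = rem (f x) (map f s).
Proof.
move=> inj_f; elim: s => [|y s IH] //=.
by rewrite (inj_eq inj_f); case: eqP => //= _; rewrite IH.
Qed.

Lemma minimal_gens_catl X Y : minimal_gens (X ++ Y) -> minimal_gens X.
Proof.
rewrite /minimal_gens cat_uniq => -[/andP[uX _] minXY]; split=> // x Xx genx.
apply: (minXY x); first by rewrite mem_cat Xx.
exact: gen_sub (mem_subseq (subseq_rem x (prefix_subseq X Y))) genx.
Qed.

Lemma minimal_gens_scale_inv X d :
  0 < d -> minimal_gens (map (fun x => x * d) X) -> minimal_gens X.
Proof.
move=> d_gt0 [uXd minXd]; have inj_d : injective (fun x => x * d).
  by move=> x y /eqP; rewrite eqn_pmul2r // => /eqP.
split=> [|x Xx /(gen_scale d)]; first by rewrite -(map_inj_uniq inj_d).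
by rewrite (map_rem_inj _ _ inj_d); apply: minXd; exact: map_f.
Qed.

Lemma minimal_gens_notin0 X : minimal_gens X -> 0 \notin X.
Proof. by move=> [_ minX]; apply/negP => /minX; apply; exact: gen0. Qed.

(* Either [c = 0] or [c - 1] is a gap of <X>; either way [c] is at most the
   conductor. *)
Definition succ_gap (X : seq nat) (c : nat) : Prop :=
  forall n, gen X n -> n.+1 <> c.

Lemma succ_gap_le X F c : frobenius X F -> succ_gap X c -> c <= F.+1.
Proof.
move=> [_ genF] gap_c; rewrite leqNgt; apply/negP => ltFc.
by apply: (gap_c c.-1); [apply: genF | ]; lia.
Qed.

Lemma succ_gap_glue s d T c :
  0 < d -> coprime d T -> gen s T -> succ_gap s c ->
  succ_gap (map (fun x => x * d) s ++ [:: T]) (d * c + (d - 1) * (T - 1)).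
Proof.
move=> d_gt0 coprime_dT sT gap_c n.
move=> /gen_cats1_inv[_ [k [/gen_scale_inv[x -> sx] ->]]] Ec.
have [T0 | T_gt0] := posnP T.
  move: coprime_dT Ec; rewrite T0 /coprime gcdn0 => /eqP-> Ec.
  by apply: (gap_c x sx); lia.
have E : d * x.+1 + T * k.+1 = d * (c + T) by nia.
have /dvdnP[u Eu] : d %| k.+1.
  rewrite -(Gauss_dvdr _ coprime_dT).
  by rewrite -(dvdn_addr _ (dvdn_mulr x.+1 (dvdnn d))) E dvdn_mulr.
have u_gt0 : 0 < u by case: u Eu.
apply: (gap_c (x + T * u.-1)); first exact: gen_add sx (gen_mulr _ sT).
have : d * (x.+1 + T * u) = d * (c + T) by rewrite -E Eu; ring.
move/eqP; rewrite eqn_pmul2l // => /eqP; case: u u_gt0 {Eu} => // u _ /=; lia.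
Qed.

Section ScaledPrefix.
Variables (s Y : seq nat) (d : nat).
Local Notation t := (map (fun x => x * d) s ++ Y).

Lemma dk_scale_cat k : k <= size s -> dk t k = dk s k * d.
Proof. by move=> le_ks; rewrite /dk takel_cat ?size_map // -map_take gcdl_scale. Qed.

Lemma ek_scale_cat k : 0 < d -> k < size s -> ek t k = ek s k.
Proof. by move=> d_gt0 lt_ks; rewrite /ek !dk_scale_cat ?divnMr // ltnW. Qed.

Lemma nth_scale_cat k : k < size s -> nth 0 t k = nth 0 s k * d.
Proof. by move=> lt_ks; rewrite nth_cat size_map lt_ks (nth_map 0). Qed.

End ScaledPrefix.

Definition plane_gens (t : seq nat) : Prop :=
  [/\ minimal_gens t, gcdl t = 1 & plane_curve_semigroup t].

Lemma plane_gens_scale s d T :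
  0 < d -> gcdl s = 1 -> free_for s ->
  plane_gens (map (fun x => x * d) s ++ [:: T]) -> plane_gens s.
Proof.
move=> d_gt0 gcd_s free_s [min_t _ [[sorted_t _] ek_t]].
split=> //; first exact: minimal_gens_scale_inv d_gt0 (minimal_gens_catl min_t).
split; [split=> // | move=> k k_ge1 k_le].
  have [+ _] := cat_sorted2 sorted_t; rewrite sorted_map.
  by apply: sub_sorted => a b /=; rewrite ltn_pmul2r.
have := ek_t k k_ge1; rewrite size_cat size_map addn1 /=.
rewrite ek_scale_cat // ?nth_scale_cat; try lia.
by rewrite mulnA ltn_pmul2r //; apply; lia.
Qed.

Lemma plane_gens_split t :
  plane_gens t -> 1 < size t ->
  exists s d T, [/\ t = map (fun x => x * d) s ++ [:: T], plane_gens s,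
                    1 < d, coprime d T & gen s T].
Proof.
case/lastP: t => [//|X T]; rewrite -cats1 size_cat addn1 ltnS => pg_t X_gt0.
have [min_t gcd_t [[_ free_t] _]] := pg_t.
have [glue_XT free_s] :
    gluing X [:: T] /\ free_fuel (size X) (map (fun x => x %/ gcdl X) X).
  move: free_t; rewrite /free_for size_cat addn1 /= size_cat addn1 /= ltnNge X_gt0.
  by rewrite /dk take_size_cat // nth_cat ltnn subnn.
set d := gcdl X.
have d_gt0 : 0 < d.
  have [x Xx] : {x | x \in X} by exists (nth 0 X 0); exact: mem_nth.
  rewrite lt0n; apply: contraTneq (gcdl_dvd Xx); rewrite -/d => ->; rewrite dvd0n.
  by apply: contraTneq (minimal_gens_notin0 min_t) => <-; rewrite negbK mem_cat Xx.
set s := map (fun x => x %/ d) X.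
have EX : X = map (fun x => x * d) s.
  by rewrite -map_comp map_id_in // => x Xx /=; rewrite divnK // gcdl_dvd.
have coprime_dT : coprime d T by rewrite /coprime -gcd_t gcdl_cat /= gcdn0.
have notin_gen_T : ~ gen X T.
  have [uniq_t min_T] := min_t.
  have T_notin_X : T \notin X by move: uniq_t; rewrite cat_uniq /= orbF andbT => /andP[].
  move=> gen_T; apply: (min_T T); first by rewrite mem_cat mem_seq1 eqxx orbT.
  apply: gen_sub gen_T => y Xy; apply: rem_mem; last by rewrite mem_cat Xy.
  by apply: contraNneq T_notin_X => <-.
have gen_X_dT : gen X (d * T).
  move: glue_XT => [_ [_ [+ _]]]; rewrite /= gcdn0 -/d.
  by have := muln_lcm_gcd d T; rewrite (eqP coprime_dT) muln1 => ->.
have d_gt1 : 1 < d.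
  rewrite ltn_neqAle eq_sym d_gt0 andbT; apply/eqP => d1.
  by apply: notin_gen_T; rewrite -[T]mul1n -d1.
have gen_s_T : gen s T.
  move: gen_X_dT; rewrite EX mulnC => /gen_scale_inv[m /eqP + s_m].
  by rewrite eqn_pmul2r // => /eqP->.
exists s, d, T; split=> //; first by rewrite -EX.
apply: (plane_gens_scale (T := T) d_gt0); last by rewrite -EX.
  by apply/eqP; rewrite -(eqn_pmul2r d_gt0) mul1n -gcdl_scale -EX.
by rewrite /free_for size_map.
Qed.

Lemma plane_gens_dk_gt1 t : plane_gens t -> 1 < size t -> 1 < dk t (size t).-1.
Proof.
move=> pg_t /(plane_gens_split pg_t)[s [d [T [-> [_ gcd_s _] d_gt1 _ _]]]].
by rewrite size_cat size_map addn1 /= dk_scale_cat // /dk take_size gcd_s mul1n.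
Qed.

Fixpoint last_gen_min n :=
  match n with 0 => 0 | 1 => 3 | n'.+1 => 4 * last_gen_min n' + 1 end.

Fixpoint conductor_min n :=
  if n is n'.+1 then 2 * conductor_min n' + (last_gen_min n).-1 else 0.

Lemma last_gen_minE n : 6 * last_gen_min n.+1 + 2 = 5 * 4 ^ n.+1.
Proof.
elim: n => [|n IH] //.
by have -> : last_gen_min n.+2 = 4 * last_gen_min n.+1 + 1 by []; rewrite expnS; lia.
Qed.

Lemma conductor_minE n : 3 * conductor_min n + 9 * 2 ^ n = 5 * 4 ^ n + 4.
Proof.
elim: n => [|n IH] //.
have -> : conductor_min n.+1 = 2 * conductor_min n + (last_gen_min n.+1).-1 by [].
have := last_gen_minE n; have : 0 < 4 ^ n by rewrite expn_gt0.
by rewrite !expnS; lia.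
Qed.

Lemma plane_gens_last_ge m t :
  plane_gens t -> size t = m.+2 -> last_gen_min m.+1 <= last 0 t.
Proof.
elim: m t => [|m IH] t pg_t size_t.
  have [s [d [T [Et pg_s d_gt1 _ _]]]] := plane_gens_split pg_t (ltac:(by rewrite size_t)).
  have s1 : s = [:: 1].
    have [_ + _] := pg_s; move: size_t; rewrite Et size_cat size_map addn1 => -[].
    by case: s {pg_s Et} => [|a [|]] //= _; rewrite gcdn0 => ->.
  have [_ _ [[+ _] _]] := pg_t; rewrite Et s1 last_cat /= mul1n => /andP[].
  by lia.
have [s [d [T [Et pg_s d_gt1 _ _]]]] := plane_gens_split pg_t (ltac:(by rewrite size_t)).
have size_s : size s = m.+2 by move: size_t; rewrite Et size_cat size_map addn1 => -[].
have [_ _ [_ ek_t]] := pg_t; have [_ gcd_s _] := pg_s.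
have := ek_t m.+1 isT (ltac:(by rewrite size_t)).
rewrite Et ek_scale_cat ?size_s ?(ltnW d_gt1) // (@nth_scale_cat s _ d m.+1) ?size_s //.
rewrite nth_cat size_map size_s ltnn subnn last_cat.
rewrite /ek [dk s m.+2]/dk take_oversize ?size_s // gcd_s divn1.
have -> : last_gen_min m.+2 = 4 * last_gen_min m.+1 + 1 by [].
have := IH s pg_s size_s; rewrite -nth_last size_s.
have := plane_gens_dk_gt1 pg_s; rewrite size_s => /(_ isT) dk_gt1.
set a := last_gen_min m.+1; rewrite /= in dk_gt1 *.
move=> le_a lt_T; suff : 2 * (a * 2) <= dk s m.+1 * (nth 0 s m.+1 * d) by lia.
by rewrite leq_mul // leq_mul.
Qed.

Lemma plane_gens_conductor_ge m t :
  plane_gens t -> size t = m.+1 -> exists2 c, conductor_min m <= c & succ_gap t c.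
Proof.
elim: m t => [|m IH] t pg_t size_t; first by exists 0 => // n _.
have [s [d [T [Et pg_s d_gt1 coprime_dT gen_s_T]]]] :=
  plane_gens_split pg_t (ltac:(by rewrite size_t)).
have size_s : size s = m.+1 by move: size_t; rewrite Et size_cat size_map addn1 => -[].
have [c le_c gap_c] := IH s pg_s size_s.
have := plane_gens_last_ge pg_t size_t; rewrite Et last_cat /= => le_T.
exists (d * c + (d - 1) * (T - 1)); last exact: succ_gap_glue (ltnW d_gt1) _ gen_s_T gap_c.
rewrite [conductor_min _]/=.
have : 2 * conductor_min m <= d * c by rewrite leq_mul.
have : 1 * (T - 1) <= (d - 1) * (T - 1) by rewrite leq_mul2r subn_gt0 d_gt1 orbT.
by lia.
Qed.

Import GRing.Theory Num.Theory.
Local Open Scope ring_scope.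

Theorem proposition5p2 (r : seq nat) (F : nat) :
  minimal_gens r ->
  finite_complement r ->
  sorted ltn r ->
  (exists n, ~ gen r n) ->
  plane_curve_semigroup r ->
  frobenius r F ->
  let h := (size r).-1 in
  (5%:R / 3%:R) * 2%:R ^+ (2 * h) - 3%:R * 2%:R ^+ h + 4%:R / 3%:R
    <= ((F + 1)%N)%:R :> rat.
Proof.
(* Sortedness is part of [plane_curve_semigroup]; for [h = 0] the bound is 0. *)
move=> min_r [N genN] _ _ pc_r frob_F; cbv zeta; set h := (size r).-1.
have gcd_r : gcdl r = 1%N.
  have := gcdl_dvd_gen (genN N.+1 (leqnSn N)).
  by rewrite -[N.+1]addn1 (dvdn_addr _ (gcdl_dvd_gen (genN N (leqnn N)))) dvdn1 => /eqP.
have size_r : size r = h.+1 by rewrite /h; case: (r) gcd_r.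
have [c le_c gap_c] := plane_gens_conductor_ge (And3 min_r gcd_r pc_r) size_r.
have le_cF : (conductor_min h <= F + 1)%N.
  by rewrite addn1; exact: leq_trans le_c (succ_gap_le frob_F gap_c).
have E : 3%:R * (conductor_min h)%:R + 9%:R * 2%:R ^+ h
          = 5%:R * 2%:R ^+ (2 * h) + 4%:R :> rat.
  by rewrite -!natrX -!natrM -!natrD expnM conductor_minE.
move: le_cF; rewrite -(ler_nat rat) => le_cF.
lra.
Qed.
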